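(* Let $0<q<1$, let $\pi=\pi_+\oplus\pi_-$ be the spin representation of $\mathcal{A}(S^2_q)$ on $\mathcal{H}=\mathcal{H}_+\oplus\mathcal{H}_-$, and let $D|l,m\rangle_\pm=(l+\tfrac12)|l,m\rangle_\mp$. Let $B$ be the $*$-algebra generated by $\pi(\mathcal{A}(S^2_q))$ and the commutators $[D,\pi(x)]$, $x\in\mathcal{A}(S^2_q)$. Then $B\subset\mathcal{B}(\mathcal{H})$ (all these commutators are bounded), and $(\mathcal{A}(S^2_q),\mathcal{H},D)$ is a regular spectral triple of metric dimension $2$.
   Context: $\mathcal{A}(S^2_q)$ is the unital $*$-algebra generated by $a,a^*$ and $b=b^*$ with relations $ba=q^2ab$, $a^*a+b^2=1$, $q^4aa^*+b^2=q^4$. $\mathcal{H}_\pm$ each have orthonormal basis $|l,m\rangle_\pm$, $l\in\mathbb{N}+\tfrac12$, $m=-l,-l+1,\dots,l$ (vectors with indices out of range are $0$). With $[x]=(q^x-q^{-x})/(q-q^{-1})$: $\pi_\pm(a)|l,m\rangle_\pm=q^{m-l-\frac12}\frac{\sqrt{[l+m+1][l+m+2]}}{[2l+2]}|l+1,m+1\rangle_\pm-q^{m+l+\frac12}\frac{\sqrt{[l-m-1][l-m]}}{[2l]}|l-1,m+1\rangle_\pm\pm\frac{(1+q^2)q^{m-\frac12}}{[2l][2l+2]}\sqrt{[l+m+1][l-m]}\,|l,m+1\rangle_\pm$, $\pi_\pm(b)|l,m\rangle_\pm=-q^{m+1}\frac{\sqrt{[l+m+1][l-m+1]}}{[2l+2]}|l+1,m\rangle_\pm-q^{m+1}\frac{\sqrt{[l+m][l-m]}}{[2l]}|l-1,m\rangle_\pm\pm\frac{[l-m+1][l+m]-q^2[l-m][l+m+1]}{[2l][2l+2]}|l,m\rangle_\pm$;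 these extend to bounded $*$-representations. A spectral triple is regular if $A\cup[D,A]\subset\bigcap_j\mathrm{dom}\,\delta^j$, $\delta(T)=[|D|,T]$. Metric dimension $d$ means the singular values of $|D|^{-1}$ are of order $n^{-1/d}$ as $n\to\infty$. *)

From Stdlib Require Import Reals Lra ZArith List.
From Coquelicot Require Import Coquelicot.
Open Scope R_scope.

(** * Basis of H = H_+ (+) H_-
   A basis vector |l,m>_s is encoded by (s, n, j) : bool * Z * Z with
   s = true for "+", s = false for "-", l = n + 1/2, m = j + 1/2.
   It is a genuine basis vector iff n >= 0 and -l <= m <= l,
   i.e. 0 <= n and -(n+1) <= j <= n. *)
Definition idx : Type := (bool * Z * Z)%type.

Definition validb (i : idx) : bool :=
  let '(s, n, j) := i in
  (0 <=? n)%Z && (- (n + 1) <=? j)%Z && (j <=? n)%Z.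

Definition valid (i : idx) : Prop := validb i = true.

Definition lval (n : Z) : R := IZR n + / 2.
Definition mval (j : Z) : R := IZR j + / 2.

(** Vectors: coordinate functions (only valid coordinates are meaningful);
    operators act on coordinate functions. *)
Definition V : Type := idx -> R.
Definition Op : Type := V -> V.

Definition ext (f : V) (i : idx) : R := if validb i then f i else 0.

Definition qnum (q x : R) : R := (Rpower q x - Rpower q (- x)) / (q - / q).

Definition sgn (s : bool) : R := if s then 1 else -1.

(** coefficients of pi_pm(a) |l,m> (l = n+1/2, m = j+1/2) *)
Definition A1 (q : R) (n j : Z) : R :=
  let l := lval n in let m := mval j in
  Rpower q (m - l - / 2) * sqrt (qnum q (l + m + 1) * qnum q (l + m + 2))
    / qnum q (2 * l + 2).
Definition A2 (q : R) (n j : Z) : R :=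
  let l := lval n in let m := mval j in
  Rpower q (m + l + / 2) * sqrt (qnum q (l - m - 1) * qnum q (l - m))
    / qnum q (2 * l).
Definition A3 (q : R) (n j : Z) : R :=
  let l := lval n in let m := mval j in
  (1 + q ^ 2) * Rpower q (m - / 2) / (qnum q (2 * l) * qnum q (2 * l + 2))
    * sqrt (qnum q (l + m + 1) * qnum q (l - m)).

(** coefficients of pi_pm(b) |l,m> *)
Definition B1 (q : R) (n j : Z) : R :=
  let l := lval n in let m := mval j in
  Rpower q (m + 1) * sqrt (qnum q (l + m + 1) * qnum q (l - m + 1))
    / qnum q (2 * l + 2).
Definition B2 (q : R) (n j : Z) : R :=
  let l := lval n in let m := mval j in
  Rpower q (m + 1) * sqrt (qnum q (l + m) * qnum q (l - m)) / qnum q (2 * l).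
Definition B3 (q : R) (n j : Z) : R :=
  let l := lval n in let m := mval j in
  (qnum q (l - m + 1) * qnum q (l + m) - q ^ 2 * qnum q (l - m) * qnum q (l + m + 1))
    / (qnum q (2 * l) * qnum q (2 * l + 2)).

(** pi(a) = pi_+(a) (+) pi_-(a), written coordinatewise:
    pi(a) |l,m>_s = A1 |l+1,m+1>_s - A2 |l-1,m+1>_s + sgn s * A3 |l,m+1>_s *)
Definition pi_a (q : R) : Op := fun f i =>
  let '(s, n, j) := i in
  if validb i then
      A1 q (n - 1) (j - 1) * ext f (s, n - 1, j - 1)%Z
    - A2 q (n + 1) (j - 1) * ext f (s, n + 1, j - 1)%Z
    + sgn s * A3 q n (j - 1) * ext f (s, n, j - 1)%Z
  else 0.

(** pi(a-star) = adjoint of pi(a) (the matrix coefficients are real, so this is the transpose) *)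
Definition pi_astar (q : R) : Op := fun f i =>
  let '(s, n, j) := i in
  if validb i then
      A1 q n j * ext f (s, n + 1, j + 1)%Z
    - A2 q n j * ext f (s, n - 1, j + 1)%Z
    + sgn s * A3 q n j * ext f (s, n, j + 1)%Z
  else 0.

(** pi(b) |l,m>_s = - B1 |l+1,m>_s - B2 |l-1,m>_s + sgn s * B3 |l,m>_s *)
Definition pi_b (q : R) : Op := fun f i =>
  let '(s, n, j) := i in
  if validb i then
    - B1 q (n - 1) j * ext f (s, n - 1, j)%Z
    - B2 q (n + 1) j * ext f (s, n + 1, j)%Z
    + sgn s * B3 q n j * ext f (s, n, j)
  else 0.

(** Dirac operator D |l,m>_pm = (l + 1/2) |l,m>_mp ; note l + 1/2 = n + 1 *)
Definition Dop : Op := fun f i =>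
  let '(s, n, j) := i in
  if validb i then (IZR n + 1) * ext f (negb s, n, j) else 0.

(** |D| |l,m>_pm = (l + 1/2) |l,m>_pm  (indeed D^2 = |D|^2, |D| >= 0) *)
Definition absD : Op := fun f i =>
  let '(s, n, j) := i in
  if validb i then (IZR n + 1) * f i else 0.

Definition op_add (S T : Op) : Op := fun f i => S f i + T f i.
Definition op_scal (r : R) (T : Op) : Op := fun f i => r * T f i.
Definition op_comp (S T : Op) : Op := fun f => S (T f).
Definition op_id : Op := fun f => f.
Definition comm (S T : Op) : Op := fun f i => S (T f) i - T (S f) i.

Inductive InAlg (G : Op -> Prop) : Op -> Prop :=
| InAlg_gen : forall T, G T -> InAlg G T
| InAlg_id : InAlg G op_id
| InAlg_add : forall S T, InAlg G S -> InAlg G T -> InAlg G (op_add S T)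
| InAlg_scal : forall r T, InAlg G T -> InAlg G (op_scal r T)
| InAlg_comp : forall S T, InAlg G S -> InAlg G T -> InAlg G (op_comp S T).

Definition piA (q : R) : Op -> Prop :=
  InAlg (fun T => T = pi_a q \/ T = pi_astar q \/ T = pi_b q).

Definition Bgen (q : R) (T : Op) : Prop :=
  piA q T \/ exists T0, piA q T0 /\ T = comm Dop T0.

(** B : the algebra generated by pi(A) and [D, pi(A)]
   (it is a *-algebra) *)
Definition Balg (q : R) : Op -> Prop := InAlg (Bgen q).

Definition sumsq (L : list idx) (f : V) : R :=
  fold_right (fun i acc => f i ^ 2 + acc) 0 L.

(** T is bounded on H: ||T f|| <= C ||f|| for all finitely supported f,
    i.e. T extends to an element of B(H). *)
Definition Bounded (T : Op) : Prop :=
  exists C : R, 0 <= C /\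
    forall (L : list idx) (f : V),
      NoDup L -> List.Forall valid L -> (forall i, ~ In i L -> f i = 0) ->
      forall L' : list idx, NoDup L' -> List.Forall valid L' ->
        sumsq L' (T f) <= C ^ 2 * sumsq L f.

Definition delta_ (e : idx) : V :=
  fun i => if (Bool.eqb (fst (fst i)) (fst (fst e))
              && Z.eqb (snd (fst i)) (snd (fst e))
              && Z.eqb (snd i) (snd e))%bool then 1 else 0.

Definition absD_eig (i : idx) : R := let '(s, n, j) := i in IZR n + 1.

(** (A(S^2_q), H, D) is a spectral triple:
    pi(A) acts by bounded operators, D is symmetric (self-adjoint, being
    diagonalised by the orthonormal basis with real eigenvalues), D has
    compact resolvent (|D|^{-1} compact: its eigenvalues tend to 0 with
    finite multiplicities), and [D, pi(x)] is bounded for every x. *)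
Definition SpectralTriple (q : R) : Prop :=
  (forall T, piA q T -> Bounded T) /\
  (forall i e, valid i -> valid e -> Dop (delta_ e) i = Dop (delta_ i) e) /\
  (forall eps, 0 < eps -> exists L : list idx,
      forall i, valid i -> eps <= / absD_eig i -> In i L) /\
  (forall T, piA q T -> Bounded (comm Dop T)).

Definition delta (T : Op) : Op := comm absD T.

(** regularity: A and [D, A] lie in the domain of every power of delta *)
Definition Regular (q : R) : Prop :=
  forall T, Bgen q T -> forall k : nat, Bounded (Nat.iter k delta T).

(** singular values of |D|^{-1} (decreasing rearrangement of its eigenvalues
    counted with multiplicity, indexed from 0):
    mu_k = inf { t >= 0 | #{ i : eigenvalue of |D|^{-1} at i > t } <= k } *)
Definition count_le (t : R) (k : nat) : Prop :=
  exists L : list idx, (length L <= k)%nat /\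
    forall i, valid i -> t < / absD_eig i -> In i L.

Definition sing_absDinv (k : nat) : R :=
  real (Glb_Rbar (fun t => 0 <= t /\ count_le t k)).

Definition MetricDimension (d : R) : Prop :=
  exists (c C : R) (N : nat), 0 < c /\ 0 < C /\ (1 <= N)%nat /\
    forall k : nat, (N <= k)%nat ->
      c * Rpower (INR k) (- / d) <= sing_absDinv k <=
      C * Rpower (INR k) (- / d).

From Stdlib Require Import Reals Lra Lia ZArith List.
From Coquelicot Require Import Coquelicot.
Open Scope R_scope.

(* Every operator in sight is a finite sum of weighted shifts
   [(e f)(s, n, j) = c(s, n, j) f(s', n + dn, j + dj)], with [s'] either [s] or its flip.
   Such sums are closed under sums, scalars and products, the commutators with [D] and [|D|]
   act on them termwise, and a weighted shift with bounded coefficients is bounded, the shift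
   being injective on basis vectors.  Each of pi(a), its adjoint and pi(b) is a sum of three
   shifts: two with [dn = +-1] and coefficients bounded by [1 / (1 - q^2)], and a diagonal one
   carrying the sign of [H_+-], whose coefficient decays like [q^(2l+1)].  Commuting with [D]
   multiplies the first two by [-dn] but the third by [+-2(l + 1/2)], which the decay absorbs;
   the Leibniz rule propagates this to all of pi(A).  As [|D|] is diagonal with eigenvalue
   [n + 1 = l + 1/2], [[|D|, e] = - dn e], whence regularity.  Finally the eigenvalue [n + 1]
   has multiplicity [4(n + 1)], so the k-th singular value of [|D|^-1] is of order [k^(-1/2)]. *)

(** * Weighted shifts *)

Record wshift := WShift {
  ws_flip : bool; ws_dn : Z; ws_dj : Z; ws_coef : idx -> R }.

Definition ws_target (e : wshift) (i : idx) : idx :=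
  let '(s, n, j) := i in (xorb (ws_flip e) s, n + ws_dn e, j + ws_dj e)%Z.

Definition ws_apply (e : wshift) : Op := fun f i =>
  if validb i then ws_coef e i * ext f (ws_target e i) else 0.

Definition ws_sum (l : list wshift) : Op := fun f i =>
  fold_right (fun e acc => ws_apply e f i + acc) 0 l.

Definition represents (l : list wshift) (T : Op) : Prop :=
  forall f i, validb i = true -> T f i = ws_sum l f i.

Lemma validb_sign s s' n j : validb (s, n, j) = validb (s', n, j).
Proof. reflexivity. Qed.

Lemma ws_target_inj e : forall i i', ws_target e i = ws_target e i' -> i = i'.
Proof.
  intros [[s n] j] [[s' n'] j'] E; injection E as Es En Ej.
  replace s' with s by (destruct (ws_flip e), s, s'; simpl in Es; congruence).
  f_equal; [f_equal|]; lia.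
Qed.

Lemma ws_sum_cons e l f i : ws_sum (e :: l) f i = ws_apply e f i + ws_sum l f i.
Proof. reflexivity. Qed.

Lemma ws_sum_ext l g h i :
  (forall k, validb k = true -> g k = h k) -> ws_sum l g i = ws_sum l h i.
Proof.
  intros Hgh; induction l as [|e l IH]; [reflexivity|]. rewrite !ws_sum_cons, IH.
  unfold ws_apply, ext; destruct (validb i), (validb (ws_target e i)) eqn:Ev;
    rewrite ?Hgh; auto.
Qed.

Lemma ws_sum_app l1 l2 f i : ws_sum (l1 ++ l2) f i = ws_sum l1 f i + ws_sum l2 f i.
Proof.
  induction l1 as [|e l1 IH]; cbn [app]; [unfold ws_sum at 2; cbn; ring|].
  rewrite !ws_sum_cons, IH; ring.
Qed.

Lemma ws_apply_add e u v i :
  ws_apply e (fun k => u k + v k) i = ws_apply e u i + ws_apply e v i.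
Proof. unfold ws_apply, ext; destruct (validb i), (validb (ws_target e i)); ring. Qed.

Definition ws_comp (e1 e2 : wshift) : wshift :=
  WShift (xorb (ws_flip e1) (ws_flip e2)) (ws_dn e1 + ws_dn e2) (ws_dj e1 + ws_dj e2)
    (fun i => if validb (ws_target e1 i)
              then ws_coef e1 i * ws_coef e2 (ws_target e1 i) else 0).

Lemma ws_target_comp e1 e2 i : ws_target (ws_comp e1 e2) i = ws_target e2 (ws_target e1 i).
Proof.
  destruct i as [[s n] j]; cbn; f_equal; [f_equal|]; try ring;
  destruct (ws_flip e1), (ws_flip e2), s; reflexivity.
Qed.

Lemma ws_apply_comp e1 e2 f i :
  ws_apply e1 (ws_apply e2 f) i = ws_apply (ws_comp e1 e2) f i.
Proof.
  unfold ws_apply at 1 3; destruct (validb i); [|reflexivity].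
  rewrite ws_target_comp; cbn [ws_comp ws_coef]; unfold ext at 1, ws_apply.
  destruct (validb (ws_target e1 i)); ring.
Qed.

Definition ws_comp_list (l1 l2 : list wshift) : list wshift :=
  flat_map (fun e1 => map (ws_comp e1) l2) l1.

Lemma ws_apply_sum e l f i :
  ws_apply e (ws_sum l f) i = ws_sum (map (ws_comp e) l) f i.
Proof.
  induction l as [|e2 l IH]; cbn [map].
  - unfold ws_apply, ws_sum, ext; cbn.
    destruct (validb i), (validb (ws_target e i)); ring.
  - rewrite ws_sum_cons, <- IH, <- ws_apply_comp, <- ws_apply_add; reflexivity.
Qed.

Lemma represents_comp l1 l2 S T :
  represents l1 S -> represents l2 T -> represents (ws_comp_list l1 l2) (op_comp S T).
Proof.
  intros HS HT f i Hi; unfold op_comp; rewrite HS by exact Hi.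
  rewrite (ws_sum_ext l1 (T f) (ws_sum l2 f)) by (intros; apply HT; assumption).
  clear HS; induction l1 as [|e l1 IH]; [reflexivity|].
  cbn [ws_comp_list flat_map]; fold (ws_comp_list l1 l2).
  rewrite ws_sum_app, <- IH, ws_sum_cons, ws_apply_sum; reflexivity.
Qed.

Lemma represents_add l1 l2 S T :
  represents l1 S -> represents l2 T -> represents (l1 ++ l2) (op_add S T).
Proof. intros HS HT f i Hi; unfold op_add; rewrite ws_sum_app, HS, HT; auto. Qed.

Definition ws_scale (r : R) (e : wshift) : wshift :=
  WShift (ws_flip e) (ws_dn e) (ws_dj e) (fun i => r * ws_coef e i).

Lemma ws_target_scale r e i : ws_target (ws_scale r e) i = ws_target e i.
Proof. destruct i as [[s n] j]; reflexivity. Qed.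

Lemma ws_apply_scale r e f i : ws_apply (ws_scale r e) f i = r * ws_apply e f i.
Proof. unfold ws_apply; rewrite ws_target_scale; destruct (validb i); cbn; ring. Qed.

Lemma represents_scale r l T : represents l T -> represents (map (ws_scale r) l) (op_scal r T).
Proof.
  intros HT f i Hi; unfold op_scal; rewrite HT by exact Hi; clear HT.
  induction l as [|e l IH]; cbn [map]; [unfold ws_sum; cbn; ring|].
  rewrite !ws_sum_cons, ws_apply_scale, <- IH; ring.
Qed.

Definition ws_id : wshift := WShift false 0 0 (fun _ => 1).

Lemma represents_id : represents (ws_id :: nil) op_id.
Proof.
  intros f [[s n] j] Hi; unfold op_id; rewrite ws_sum_cons; unfold ws_sum, ws_apply, ext.
  cbn [ws_target ws_id ws_coef ws_flip ws_dn ws_dj xorb fold_right].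
  rewrite !Z.add_0_r, Hi; ring.
Qed.

Definition ws_commD (e : wshift) : wshift :=
  WShift (negb (ws_flip e)) (ws_dn e) (ws_dj e) (fun i => let '(s, n, j) := i in
    (IZR n + 1) * ws_coef e (negb s, n, j) - (IZR (n + ws_dn e) + 1) * ws_coef e (s, n, j)).

Lemma validb_target_commD e i : validb (ws_target (ws_commD e) i) = validb (ws_target e i).
Proof. destruct i as [[s n] j]; reflexivity. Qed.

Lemma ws_apply_commD e f s n j : validb (s, n, j) = true ->
  (IZR n + 1) * ws_apply e f (negb s, n, j) - ws_apply e (Dop f) (s, n, j)
  = ws_apply (ws_commD e) f (s, n, j).
Proof.
  intros Hi; unfold ws_apply; rewrite (validb_sign (negb s) s), Hi.
  cbn [ws_target ws_commD ws_coef ws_flip ws_dn ws_dj]; unfold ext.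
  rewrite (validb_sign (xorb (negb (ws_flip e)) s) (xorb (ws_flip e) s)),
    (validb_sign (xorb (ws_flip e) (negb s)) (xorb (ws_flip e) s)).
  destruct (validb (xorb (ws_flip e) s, (n + ws_dn e)%Z, (j + ws_dj e)%Z)) eqn:Ev; [|ring].
  unfold Dop; rewrite Ev; unfold ext.
  rewrite (validb_sign (negb (xorb (ws_flip e) s)) (xorb (ws_flip e) s)), Ev.
  replace (xorb (ws_flip e) (negb s)) with (xorb (negb (ws_flip e)) s)
    by (destruct (ws_flip e), s; reflexivity).
  replace (negb (xorb (ws_flip e) s)) with (xorb (negb (ws_flip e)) s)
    by (destruct (ws_flip e), s; reflexivity).
  ring.
Qed.

Lemma represents_commD l T : represents l T -> represents (map ws_commD l) (comm Dop T).
Proof.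
  intros HT f [[s n] j] Hi; unfold comm, Dop at 1; rewrite Hi; unfold ext at 1.
  rewrite (validb_sign (negb s) s), Hi, !HT by assumption; clear HT.
  induction l as [|e l IH]; cbn [map]; [cbn; ring|].
  rewrite !ws_sum_cons, <- IH, <- ws_apply_commD by assumption; ring.
Qed.

(* [|D|] acts on the block n by [n + 1], so [[|D|, e] = - ws_dn e * e]. *)
Definition ws_delta (e : wshift) : wshift := ws_scale (- IZR (ws_dn e)) e.

Lemma ws_apply_delta e f s n j : validb (s, n, j) = true ->
  (IZR n + 1) * ws_apply e f (s, n, j) - ws_apply e (absD f) (s, n, j)
  = ws_apply (ws_delta e) f (s, n, j).
Proof.
  intros Hi; unfold ws_delta; rewrite ws_apply_scale; unfold ws_apply; rewrite Hi.
  cbn [ws_target]; unfold ext.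
  destruct (validb (xorb (ws_flip e) s, (n + ws_dn e)%Z, (j + ws_dj e)%Z)) eqn:Ev; [|ring].
  unfold absD; rewrite Ev, plus_IZR; ring.
Qed.

Lemma represents_delta l T : represents l T -> represents (map ws_delta l) (delta T).
Proof.
  intros HT f [[s n] j] Hi; unfold delta, comm, absD at 1; rewrite Hi, !HT by assumption.
  clear HT; induction l as [|e l IH]; cbn [map]; [cbn; ring|].
  rewrite !ws_sum_cons, <- IH, <- ws_apply_delta by assumption; ring.
Qed.

Fixpoint sum_over (g : idx -> R) (L : list idx) : R :=
  match L with nil => 0 | i :: L => g i + sum_over g L end.

Lemma sumsq_sum_over L f : sumsq L f = sum_over (fun i => f i ^ 2) L.
Proof.
  induction L as [|i L IH]; [reflexivity|].
  unfold sumsq in *; cbn [fold_right sum_over]; rewrite IH; reflexivity.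
Qed.

Lemma sum_over_app g L1 L2 : sum_over g (L1 ++ L2) = sum_over g L1 + sum_over g L2.
Proof. induction L1 as [|i L1 IH]; cbn; [ring|]. rewrite IH; ring. Qed.

Lemma sum_over_nonneg g L : (forall k, 0 <= g k) -> 0 <= sum_over g L.
Proof. intros Hg; induction L as [|i L IH]; cbn; [lra|]. specialize (Hg i); lra. Qed.

Lemma sumsq_nonneg L f : 0 <= sumsq L f.
Proof. rewrite sumsq_sum_over; apply sum_over_nonneg; intros; apply pow2_ge_0. Qed.

Lemma sum_over_le u v L : (forall i, In i L -> u i <= v i) -> sum_over u L <= sum_over v L.
Proof.
  induction L as [|i L IH]; cbn; intros Huv; [lra|].
  assert (u i <= v i) by auto. assert (sum_over u L <= sum_over v L) by auto. lra.
Qed.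

Lemma sum_over_ext u v L : (forall i, In i L -> u i = v i) -> sum_over u L = sum_over v L.
Proof. induction L as [|i L IH]; cbn; intros Huv; [|rewrite Huv, IH]; auto. Qed.

Lemma sum_over_scale r g L : sum_over (fun i => r * g i) L = r * sum_over g L.
Proof. induction L as [|i L IH]; cbn; [|rewrite IH]; ring. Qed.

Lemma sum_over_map g h L : sum_over g (map h L) = sum_over (fun i => g (h i)) L.
Proof. induction L as [|i L IH]; cbn; [|rewrite IH]; reflexivity. Qed.

Lemma sum_over_sq_add u v L : sum_over (fun i => (u i + v i) ^ 2) L <=
  2 * sum_over (fun i => u i ^ 2) L + 2 * sum_over (fun i => v i ^ 2) L.
Proof.
  induction L as [|i L IH]; cbn [sum_over]; [lra|].
  assert (2 * u i ^ 2 + 2 * v i ^ 2 - (u i + v i) ^ 2 = (u i - v i) ^ 2) by ring.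
  pose proof (pow2_ge_0 (u i - v i)); lra.
Qed.

Lemma idx_eq_dec (x y : idx) : {x = y} + {x <> y}.
Proof. repeat decide equality. Defined.

Lemma sum_over_le_support g K : forall L, NoDup K -> NoDup L ->
  (forall k, In k K -> ~ In k L -> g k = 0) -> (forall k, 0 <= g k) ->
  sum_over g K <= sum_over g L.
Proof.
  induction K as [|k K IH]; intros L HK HL Hsupp Hg; cbn; [apply sum_over_nonneg; auto|].
  inversion HK as [|? ? HkK HK']; subst.
  destruct (In_dec idx_eq_dec k L) as [Hin|Hout].
  - destruct (in_split _ _ Hin) as [L1 [L2 ->]].
    assert (sum_over g K <= sum_over g (L1 ++ L2)).
    { apply IH; [exact HK' | eapply NoDup_remove_1; eauto | |exact Hg].
      intros k' Hk' Hout'; apply Hsupp; [now right|].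
      intros Hin'; apply in_app_or in Hin' as [H|[H|H]];
        [apply Hout', in_or_app; auto | subst; contradiction | apply Hout', in_or_app; auto]. }
    rewrite sum_over_app in *; cbn; lra.
  - rewrite Hsupp by (cbn; auto).
    assert (sum_over g K <= sum_over g L) by (apply IH; auto; intros; apply Hsupp; cbn; auto).
    lra.
Qed.

Lemma Bounded_ext S T :
  (forall f i, validb i = true -> S f i = T f i) -> Bounded S -> Bounded T.
Proof.
  intros HST [C [HC HS]]; exists C; split; [exact HC|].
  intros L f HL HLv Hf L' HL' HL'v.
  replace (sumsq L' (T f)) with (sumsq L' (S f)); [apply HS; auto|].
  rewrite !sumsq_sum_over; apply sum_over_ext; intros i Hi.
  rewrite HST; [reflexivity|]. exact (proj1 (Forall_forall _ _) HL'v i Hi).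
Qed.

Lemma Bounded_op_add S T : Bounded S -> Bounded T -> Bounded (op_add S T).
Proof.
  intros [C1 [HC1 H1]] [C2 [HC2 H2]]; exists (2 * (C1 + C2)); split; [lra|].
  intros L f HL HLv Hf L' HL' HL'v.
  specialize (H1 L f HL HLv Hf L' HL' HL'v); specialize (H2 L f HL HLv Hf L' HL' HL'v).
  pose proof (sumsq_nonneg L f).
  assert (2 * C1 ^ 2 + 2 * C2 ^ 2 <= (2 * (C1 + C2)) ^ 2) by nra.
  unfold op_add; rewrite sumsq_sum_over; eapply Rle_trans; [apply sum_over_sq_add|].
  rewrite !sumsq_sum_over in *; nra.
Qed.

Definition ws_bounded (e : wshift) : Prop := exists M, forall i, validb i = true ->
  validb (ws_target e i) = true -> Rabs (ws_coef e i) <= M.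

Lemma ws_bounded_nonneg e : ws_bounded e -> exists M, 0 <= M /\ forall i,
  validb i = true -> validb (ws_target e i) = true -> Rabs (ws_coef e i) <= M.
Proof.
  intros [M HM]; exists (Rabs M); split; [apply Rabs_pos|].
  intros i Hi Ht; eapply Rle_trans; [apply HM; assumption | apply RRle_abs].
Qed.

(* [ws_target e] is injective, so [f o ws_target e] carries no more l^2 mass than [f]. *)
Lemma Bounded_ws_apply e : ws_bounded e -> Bounded (ws_apply e).
Proof.
  intros He; destruct (ws_bounded_nonneg e He) as [M [HM0 HM]]; exists M; split; [exact HM0|].
  intros L f HL HLv Hf L' HL' HL'v; rewrite !sumsq_sum_over.
  apply Rle_trans with (sum_over (fun i => M ^ 2 * f (ws_target e i) ^ 2) L').
  - apply sum_over_le; intros i Hi.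
    assert (Hv : validb i = true) by exact (proj1 (Forall_forall _ _) HL'v i Hi).
    unfold ws_apply, ext; rewrite Hv; destruct (validb (ws_target e i)) eqn:Et.
    + specialize (HM i Hv Et).
      assert (ws_coef e i ^ 2 <= M ^ 2)
        by (rewrite <- (pow2_abs (ws_coef e i)); apply pow_incr; split;
            [apply Rabs_pos | exact HM]).
      rewrite Rpow_mult_distr; apply Rmult_le_compat_r; [apply pow2_ge_0 | assumption].
    + rewrite Rmult_0_r, pow_i by lia; apply Rmult_le_pos; apply pow2_ge_0.
  - rewrite sum_over_scale; apply Rmult_le_compat_l; [apply pow2_ge_0|].
    rewrite <- (sum_over_map (fun k => f k ^ 2) (ws_target e)).
    apply sum_over_le_support; auto.
    + apply NoDup_map_NoDup_ForallPairs; [|exact HL']. intros x y _ _; apply ws_target_inj.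
    + intros k _ Hk; rewrite Hf by exact Hk; ring.
    + intros; apply pow2_ge_0.
Qed.

Lemma Bounded_ws_sum l : List.Forall ws_bounded l -> Bounded (ws_sum l).
Proof.
  induction 1 as [|e l He _ IH].
  - exists 0; split; [lra|]; intros L f _ _ _ L' _ _.
    pose proof (sumsq_nonneg L f).
    rewrite sumsq_sum_over, (sum_over_ext _ (fun _ => 0 * 0)) by (intros; unfold ws_sum; cbn; ring).
    rewrite sum_over_scale; lra.
  - exact (Bounded_op_add _ _ (Bounded_ws_apply e He) IH).
Qed.

Lemma Bounded_represents l T : represents l T -> List.Forall ws_bounded l -> Bounded T.
Proof.
  intros HT Hl; apply (Bounded_ext (ws_sum l)); [|now apply Bounded_ws_sum].
  intros f i Hi; symmetry; exact (HT f i Hi).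
Qed.

Lemma ws_bounded_comp e1 e2 : ws_bounded e1 -> ws_bounded e2 -> ws_bounded (ws_comp e1 e2).
Proof.
  intros H1 H2; destruct (ws_bounded_nonneg e1 H1) as [M1 [HM1 B1]],
    (ws_bounded_nonneg e2 H2) as [M2 [HM2 B2]].
  exists (M1 * M2); intros i Hi Ht; rewrite ws_target_comp in Ht; cbn [ws_comp ws_coef].
  destruct (validb (ws_target e1 i)) eqn:E.
  - rewrite Rabs_mult; apply Rmult_le_compat; try apply Rabs_pos; auto.
  - rewrite Rabs_R0; apply Rmult_le_pos; assumption.
Qed.

Lemma ws_bounded_scale r e : ws_bounded e -> ws_bounded (ws_scale r e).
Proof.
  intros He; destruct (ws_bounded_nonneg e He) as [M [HM B]]; exists (Rabs r * M).
  intros i Hi Ht; rewrite ws_target_scale in Ht; cbn [ws_scale ws_coef]; rewrite Rabs_mult.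
  apply Rmult_le_compat_l; [apply Rabs_pos | auto].
Qed.

(* The coefficientwise Leibniz rule below needs [e] not to exchange [H_+] and [H_-]. *)
Definition ws_lipschitz (e : wshift) : Prop :=
  ws_flip e = false /\ ws_bounded e /\ ws_bounded (ws_commD e).

Lemma ws_lipschitz_id : ws_lipschitz ws_id.
Proof.
  split; [reflexivity|split]; [exists 1 | exists 0]; intros [[s n] j] _ _;
    cbn [ws_coef ws_id ws_commD].
  - rewrite Rabs_R1; lra.
  - rewrite Z.add_0_r, Rmult_1_r, Rminus_diag, Rabs_R0; lra.
Qed.

Lemma ws_lipschitz_scale r e : ws_lipschitz e -> ws_lipschitz (ws_scale r e).
Proof.
  intros [Hf [Hb Hc]]; split; [exact Hf | split; [now apply ws_bounded_scale|]].
  destruct (ws_bounded_scale r _ Hc) as [M HM]; exists M; intros [[s n] j] Hi Ht.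
  rewrite validb_target_commD, ws_target_scale, <- validb_target_commD in Ht.
  specialize (HM (s, n, j) Hi); rewrite ws_target_scale in HM; cbn in HM |- *.
  set (X := ws_coef e (negb s, n, j)) in *; set (Y := ws_coef e (s, n, j)) in *.
  replace ((IZR n + 1) * (r * X) - (IZR (n + ws_dn e) + 1) * (r * Y))
    with (r * ((IZR n + 1) * X - (IZR (n + ws_dn e) + 1) * Y)) by ring.
  exact (HM Ht).
Qed.

Lemma ws_target_noflip e s n j :
  ws_flip e = false -> ws_target e (s, n, j) = (s, n + ws_dn e, j + ws_dj e)%Z.
Proof. intros Hf; cbn; rewrite Hf; reflexivity. Qed.

(* Leibniz rule [[D, e1 e2] = [D, e1] e2 + e1 [D, e2]], read on coefficients. *)
Lemma ws_commD_comp_coef e1 e2 s n j : ws_flip e1 = false ->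
  ws_coef (ws_commD (ws_comp e1 e2)) (s, n, j) =
  if validb (ws_target e1 (s, n, j)) then
    ws_coef (ws_commD e1) (s, n, j) * ws_coef e2 (ws_target e1 (negb s, n, j))
    + ws_coef e1 (s, n, j) * ws_coef (ws_commD e2) (ws_target e1 (s, n, j))
  else 0.
Proof.
  intros Hf; cbn [ws_commD ws_comp ws_coef ws_dn]; rewrite !ws_target_noflip by exact Hf.
  rewrite (validb_sign (negb s) s); cbn [ws_coef ws_commD].
  destruct (validb (s, (n + ws_dn e1)%Z, (j + ws_dj e1)%Z)); [rewrite !plus_IZR; ring | ring].
Qed.

Lemma ws_lipschitz_comp e1 e2 :
  ws_lipschitz e1 -> ws_lipschitz e2 -> ws_lipschitz (ws_comp e1 e2).
Proof.
  intros [Hf1 [Hb1 Hc1]] [Hf2 [Hb2 Hc2]].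
  split; [cbn; rewrite Hf1, Hf2; reflexivity | split; [now apply ws_bounded_comp|]].
  destruct (ws_bounded_nonneg _ Hb1) as [M1 [HM1 B1]], (ws_bounded_nonneg _ Hb2) as [M2 [HM2 B2]],
    (ws_bounded_nonneg _ Hc1) as [N1 [HN1 C1]], (ws_bounded_nonneg _ Hc2) as [N2 [HN2 C2]].
  exists (N1 * M2 + M1 * N2); intros [[s n] j] Hi Ht.
  rewrite validb_target_commD, ws_target_comp in Ht.
  rewrite ws_commD_comp_coef by exact Hf1.
  destruct (validb (ws_target e1 (s, n, j))) eqn:Ev.
  - assert (Ev' : validb (ws_target e1 (negb s, n, j)) = true) by exact Ev.
    assert (Ht' : validb (ws_target e2 (ws_target e1 (negb s, n, j))) = true).
    { rewrite ws_target_noflip in Ht |- * by exact Hf1; exact Ht. }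
    eapply Rle_trans; [apply Rabs_triang|]; rewrite !Rabs_mult.
    apply Rplus_le_compat; apply Rmult_le_compat; try apply Rabs_pos.
    + apply C1; [exact Hi | rewrite validb_target_commD; exact Ev].
    + apply B2; assumption.
    + apply B1; assumption.
    + apply C2; [exact Ev | rewrite validb_target_commD; exact Ht].
  - rewrite Rabs_R0; apply Rplus_le_le_0_compat; apply Rmult_le_pos; assumption.
Qed.

Lemma InAlg_represented (G : Op -> Prop) (P : wshift -> Prop) :
  P ws_id -> (forall r e, P e -> P (ws_scale r e)) ->
  (forall e1 e2, P e1 -> P e2 -> P (ws_comp e1 e2)) ->
  (forall T, G T -> exists l, represents l T /\ List.Forall P l) ->
  forall T, InAlg G T -> exists l, represents l T /\ List.Forall P l.
Proof.
  intros Hid Hscale Hcomp Hgen T HT; induction HT as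
    [T HT | | S T _ [l1 [R1 F1]] _ [l2 [R2 F2]] | r T _ [l [RT FT]]
    | S T _ [l1 [R1 F1]] _ [l2 [R2 F2]]].
  - exact (Hgen T HT).
  - exists (ws_id :: nil); split; [exact represents_id | constructor; auto].
  - exists (l1 ++ l2); split; [now apply represents_add | now apply Forall_app].
  - exists (map (ws_scale r) l); split; [now apply represents_scale|].
    apply Forall_map, (Forall_impl _ (Hscale r)), FT.
  - exists (ws_comp_list l1 l2); split; [now apply represents_comp|].
    rewrite Forall_forall in F1, F2 |- *; intros e He.
    apply in_flat_map in He as [e1 [He1 He]]; apply in_map_iff in He as [e2 [<- He2]].
    apply Hcomp; auto.
Qed.

(** * Estimates on q-numbers *)

Definition valid_nj (n j : Z) : Prop := (0 <= n /\ - (n + 1) <= j <= n)%Z.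

Lemma valid_nj_lm n j : valid_nj n j -> 1 / 2 <= lval n /\ - lval n <= mval j <= lval n.
Proof.
  intros (Hn & Hj1 & Hj2); unfold lval, mval.
  apply IZR_le in Hn, Hj1, Hj2; rewrite opp_IZR, plus_IZR in Hj1; lra.
Qed.

Lemma validb_valid_nj s n j : validb (s, n, j) = true -> valid_nj n j.
Proof.
  unfold validb, valid_nj; rewrite !Bool.andb_true_iff, !Z.leb_le; lia.
Qed.

Section QNumbers.

Variable q : R.
Hypothesis q_pos : 0 < q.
Hypothesis q_lt1 : q < 1.

Lemma Rpower_pos x : 0 < Rpower q x.
Proof. apply exp_pos. Qed.

Lemma ln_q_neg : ln q < 0.
Proof. rewrite <- ln_1; apply ln_increasing; assumption. Qed.

Lemma Rpower_antitone x y : x <= y -> Rpower q y <= Rpower q x.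
Proof.
  intros Hxy; unfold Rpower; pose proof ln_q_neg.
  destruct (Rle_lt_or_eq_dec _ _ Hxy) as [Hlt | ->]; [|lra].
  left; apply exp_increasing; nra.
Qed.

Lemma Rpower_le1 x : 0 <= x -> Rpower q x <= 1.
Proof. intros Hx; rewrite <- (Rpower_O q q_pos); apply Rpower_antitone, Hx. Qed.

Lemma Rpower_2 : Rpower q 2 = q ^ 2.
Proof. replace 2 with (INR 2) by (cbn; ring); apply Rpower_pow, q_pos. Qed.

(* From [exp t >= 1 + t >= t]. *)
Lemma mul_Rpower_le x : 0 <= x -> x * Rpower q x <= / - ln q.
Proof.
  intros Hx; pose proof ln_q_neg as Hl; set (t := - ln q); assert (Ht : 0 < t) by (unfold t; lra).
  unfold Rpower; replace (x * ln q) with (- (x * t)) by (unfold t; ring); rewrite exp_Ropp.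
  assert (E : x * t <= exp (x * t)).
  { destruct (Req_dec (x * t) 0) as [-> | Hnz]; [rewrite exp_0; lra|].
    pose proof (exp_ineq1 (x * t) Hnz); lra. }
  pose proof (exp_pos (x * t)).
  replace (x * / exp (x * t)) with (x * t / exp (x * t) * / t) by (field; lra).
  rewrite <- (Rmult_1_l (/ t)) at 2; apply Rmult_le_compat_r; [left; apply Rinv_0_lt_compat, Ht|].
  apply Rle_div_l; lra.
Qed.

Lemma one_sub_sq_pos : 0 < 1 - q ^ 2.
Proof. nra. Qed.

Definition qgap : R := / q - q.

Lemma qgap_pos : 0 < qgap.
Proof.
  unfold qgap; assert (1 < / q) by (rewrite <- Rinv_1; apply Rinv_lt_contravar; lra); lra.
Qed.

Lemma qnum_qgap x : qnum q x = (Rpower q (- x) - Rpower q x) / qgap.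
Proof.
  unfold qnum, qgap; field; repeat split; nra.
Qed.

Lemma qnum_0 : qnum q 0 = 0.
Proof. unfold qnum; rewrite Ropp_0; unfold Rdiv; ring. Qed.

Lemma qnum_nonneg x : 0 <= x -> 0 <= qnum q x.
Proof.
  intros Hx; rewrite qnum_qgap; pose proof qgap_pos.
  assert (Rpower q x <= Rpower q (- x)) by (apply Rpower_antitone; lra).
  apply Rdiv_le_0_compat; lra.
Qed.

Lemma qnum_le x : qnum q x <= Rpower q (- x) / qgap.
Proof.
  rewrite qnum_qgap; pose proof qgap_pos; pose proof (Rpower_pos x).
  apply Rmult_le_compat_r; [left; apply Rinv_0_lt_compat|]; lra.
Qed.

Lemma qnum_ge x : 1 <= x -> (1 - q ^ 2) * Rpower q (- x) / qgap <= qnum q x.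
Proof.
  intros Hx; rewrite qnum_qgap; pose proof qgap_pos; pose proof (Rpower_pos (- x)).
  assert (E : Rpower q x = Rpower q (- x) * Rpower q (2 * x))
    by (rewrite <- Rpower_plus; f_equal; ring).
  assert (Rpower q (2 * x) <= q ^ 2) by (rewrite <- Rpower_2; apply Rpower_antitone; lra).
  apply Rmult_le_compat_r; [left; apply Rinv_0_lt_compat; lra|]; rewrite E; nra.
Qed.

Lemma qnum_lower_pos x : 0 < (1 - q ^ 2) * Rpower q (- x) / qgap.
Proof.
  pose proof qgap_pos; pose proof (Rpower_pos (- x)).
  apply Rdiv_lt_0_compat; [apply Rmult_lt_0_compat; nra | lra].
Qed.

Lemma sqrt_qnum_mul_le x y : 0 <= x -> 0 <= y ->
  sqrt (qnum q x * qnum q y) <= Rpower q (- ((x + y) / 2)) / qgap.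
Proof.
  intros Hx Hy; pose proof qgap_pos; pose proof (Rpower_pos (- ((x + y) / 2))).
  rewrite <- (sqrt_pow2 (Rpower q (- ((x + y) / 2)) / qgap)) by (apply Rdiv_le_0_compat; lra).
  apply sqrt_le_1_alt.
  assert (E : Rpower q (- x) * Rpower q (- y) = Rpower q (- ((x + y) / 2)) ^ 2)
    by (unfold pow; rewrite Rmult_1_r, <- !Rpower_plus; f_equal; field).
  apply Rle_trans with (Rpower q (- x) / qgap * (Rpower q (- y) / qgap)).
  - apply Rmult_le_compat; auto using qnum_nonneg, qnum_le.
  - set (A := Rpower q (- ((x + y) / 2))) in *.
    right; unfold Rdiv; rewrite Rpow_mult_distr, <- E; ring.
Qed.

Lemma qnum_mul_le x y : 0 <= x -> 0 <= y ->
  0 <= qnum q x * qnum q y <= Rpower q (- (x + y)) / qgap ^ 2.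
Proof.
  intros Hx Hy; pose proof qgap_pos; pose proof (qnum_nonneg x Hx); pose proof (qnum_nonneg y Hy).
  split; [nra|]; apply Rle_trans with (Rpower q (- x) / qgap * (Rpower q (- y) / qgap)).
  - apply Rmult_le_compat; auto using qnum_le.
  - right; replace (- (x + y)) with (- x + - y) by ring; rewrite Rpower_plus; field; lra.
Qed.

(* Since [[x] ~ q^-x / (q^-1 - q)], the exponent condition balances numerator and
   denominator. *)
Lemma qnum_ratio_le a x y z : 0 <= x -> 0 <= y -> 1 <= z -> (x + y) / 2 <= a + z ->
  0 <= Rpower q a * sqrt (qnum q x * qnum q y) / qnum q z <= / (1 - q ^ 2).
Proof.
  intros Hx Hy Hz Hexp; pose proof qgap_pos; pose proof (qnum_lower_pos z).
  pose proof (Rpower_pos a).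
  pose proof (qnum_ge z Hz) as HD; pose proof (sqrt_qnum_mul_le x y Hx Hy) as HS.
  pose proof (sqrt_pos (qnum q x * qnum q y)); pose proof one_sub_sq_pos.
  assert (Hnum : Rpower q a * sqrt (qnum q x * qnum q y) <= / (1 - q ^ 2) * qnum q z).
  { apply Rle_trans with (Rpower q a * (Rpower q (- ((x + y) / 2)) / qgap));
      [apply Rmult_le_compat_l; lra|].
    apply Rle_trans with (/ (1 - q ^ 2) * ((1 - q ^ 2) * Rpower q (- z) / qgap));
      [|apply Rmult_le_compat_l; [left; apply Rinv_0_lt_compat|]; lra].
    replace (/ (1 - q ^ 2) * ((1 - q ^ 2) * Rpower q (- z) / qgap))
      with (Rpower q (- z) / qgap) by (field; lra).
    unfold Rdiv; rewrite <- Rmult_assoc, <- Rpower_plus.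
    apply Rmult_le_compat_r; [left; apply Rinv_0_lt_compat; lra | apply Rpower_antitone; lra]. }
  split; [apply Rdiv_le_0_compat; [apply Rmult_le_pos|]; lra | apply Rle_div_l; lra].
Qed.

Lemma Rabs_div_le N D Nb Dl : Rabs N <= Nb -> 0 < Dl <= D -> Rabs (N / D) <= Nb / Dl.
Proof.
  intros HN HD; unfold Rdiv; rewrite Rabs_mult, Rabs_inv, (Rabs_pos_eq D) by lra.
  apply Rmult_le_compat; [apply Rabs_pos | left; apply Rinv_0_lt_compat; lra | exact HN|].
  apply Rinv_le_contravar; lra.
Qed.

(* The diagonal coefficients carry the denominator [[2l][2l+2] ~ q^-(4l+2)], which makes them
   decay like [q^(2l+1)]. *)
Lemma qnum_pair_decay l N c : 1 / 2 <= l -> Rabs N <= c * Rpower q (- (2 * l + 1)) ->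
  Rabs (N / (qnum q (2 * l) * qnum q (2 * l + 2)))
  <= c * qgap ^ 2 / (1 - q ^ 2) ^ 2 * Rpower q (2 * l + 1).
Proof.
  intros Hl HN; pose proof qgap_pos; pose proof one_sub_sq_pos.
  set (D1 := (1 - q ^ 2) * Rpower q (- (2 * l)) / qgap).
  set (D2 := (1 - q ^ 2) * Rpower q (- (2 * l + 2)) / qgap).
  assert (0 < D1) by apply qnum_lower_pos; assert (0 < D2) by apply qnum_lower_pos.
  assert (D1 <= qnum q (2 * l)) by (apply qnum_ge; lra).
  assert (D2 <= qnum q (2 * l + 2)) by (apply qnum_ge; lra).
  apply Rle_trans with (c * Rpower q (- (2 * l + 1)) / (D1 * D2)).
  - apply Rabs_div_le; [exact HN | split; [apply Rmult_lt_0_compat | apply Rmult_le_compat]; lra].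
  - set (P := Rpower q (- (2 * l + 1))); assert (0 < P) by apply Rpower_pos.
    assert (E1 : Rpower q (- (2 * l)) * Rpower q (- (2 * l + 2)) = P * P)
      by (unfold P; rewrite <- !Rpower_plus; f_equal; ring).
    assert (E2 : Rpower q (2 * l + 1) = / P)
      by (unfold P; rewrite Rpower_Ropp, Rinv_inv; reflexivity).
    right; rewrite E2; unfold D1, D2.
    replace ((1 - q ^ 2) * Rpower q (- (2 * l)) / qgap
             * ((1 - q ^ 2) * Rpower q (- (2 * l + 2)) / qgap))
      with ((1 - q ^ 2) ^ 2 * (P * P) / qgap ^ 2) by (rewrite <- E1; field; lra).
    field; lra.
Qed.

Lemma decay_const_nonneg c : 0 <= c -> 0 <= c * qgap ^ 2 / (1 - q ^ 2) ^ 2.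
Proof.
  intros Hc; pose proof one_sub_sq_pos as Hq; apply Rdiv_le_0_compat;
    [apply Rmult_le_pos; [exact Hc | apply pow2_ge_0] | apply pow_lt, Hq].
Qed.

Lemma A1_bound n j : valid_nj n j -> 0 <= A1 q n j <= / (1 - q ^ 2).
Proof. intros Hv; pose proof (valid_nj_lm n j Hv); unfold A1; apply qnum_ratio_le; lra. Qed.

Lemma B1_bound n j : valid_nj n j -> 0 <= B1 q n j <= / (1 - q ^ 2).
Proof. intros Hv; pose proof (valid_nj_lm n j Hv); unfold B1; apply qnum_ratio_le; lra. Qed.

Lemma B2_bound n j : valid_nj n j -> 0 <= B2 q n j <= / (1 - q ^ 2).
Proof. intros Hv; pose proof (valid_nj_lm n j Hv); unfold B2; apply qnum_ratio_le; lra. Qed.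

(* For [m = l] the factor [[l - m - 1] = [-1]] is negative, but it multiplies [[0] = 0]. *)
Lemma A2_bound n j : valid_nj n j -> 0 <= A2 q n j <= / (1 - q ^ 2).
Proof.
  intros Hv; pose proof (valid_nj_lm n j Hv); unfold A2; cbv zeta.
  assert (Hlm : lval n - mval j = IZR (n - j)) by (unfold lval, mval; rewrite minus_IZR; ring).
  destruct (Z.eq_dec n j) as [<- | Hnj].
  - rewrite Z.sub_diag in Hlm; rewrite Hlm, qnum_0, Rmult_0_r, sqrt_0, Rmult_0_r, Rdiv_0_l.
    split; [lra | left; apply Rinv_0_lt_compat; nra].
  - assert (1 <= lval n - mval j) by (rewrite Hlm; apply IZR_le; destruct Hv; lia).
    apply qnum_ratio_le; lra.
Qed.

Lemma A3_decay : exists K, 0 <= K /\ forall n j, valid_nj n j ->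
  Rabs (A3 q n j) <= K * Rpower q (2 * lval n + 1).
Proof.
  pose proof qgap_pos; exists ((1 + q ^ 2) / qgap * qgap ^ 2 / (1 - q ^ 2) ^ 2).
  split; [apply decay_const_nonneg, Rdiv_le_0_compat; [nra | exact qgap_pos]|].
  intros n j Hv; destruct (valid_nj_lm n j Hv) as [Hl Hm]; unfold A3; cbv zeta.
  set (l := lval n) in *; set (m := mval j) in *.
  pose proof (qnum_lower_pos (2 * l)); pose proof (qnum_lower_pos (2 * l + 2)).
  pose proof (qnum_ge (2 * l) ltac:(lra)); pose proof (qnum_ge (2 * l + 2) ltac:(lra)).
  set (S := sqrt (qnum q (l + m + 1) * qnum q (l - m))).
  replace ((1 + q ^ 2) * Rpower q (m - / 2) / (qnum q (2 * l) * qnum q (2 * l + 2)) * S)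
    with ((1 + q ^ 2) * Rpower q (m - / 2) * S / (qnum q (2 * l) * qnum q (2 * l + 2)))
    by (field; lra).
  apply qnum_pair_decay; [exact Hl|].
  assert (HS : S <= Rpower q (- (2 * l + 1) / 2) / qgap).
  { unfold S; replace (- (2 * l + 1) / 2) with (- ((l + m + 1 + (l - m)) / 2)) by field.
    apply sqrt_qnum_mul_le; lra. }
  assert (0 <= S) by apply sqrt_pos.
  pose proof (Rpower_pos (m - / 2)).
  rewrite Rabs_pos_eq by (apply Rmult_le_pos; [apply Rmult_le_pos|]; nra).
  apply Rle_trans with ((1 + q ^ 2) * (Rpower q (m - / 2) * (Rpower q (- (2 * l + 1) / 2) / qgap))).
  - rewrite Rmult_assoc; apply Rmult_le_compat_l; [nra|]; apply Rmult_le_compat_l; lra.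
  - unfold Rdiv; rewrite <- (Rmult_assoc (Rpower q (m - / 2))), <- Rpower_plus.
    replace ((1 + q ^ 2) * (Rpower q (m - / 2 + - (2 * l + 1) * / 2) * / qgap))
      with ((1 + q ^ 2) * / qgap * Rpower q (m - / 2 + - (2 * l + 1) * / 2)) by ring.
    apply Rmult_le_compat_l; [apply Rmult_le_pos; [nra | left; apply Rinv_0_lt_compat; lra]|].
    apply Rpower_antitone; lra.
Qed.

Lemma B3_decay : exists K, 0 <= K /\ forall n j, valid_nj n j ->
  Rabs (B3 q n j) <= K * Rpower q (2 * lval n + 1).
Proof.
  pose proof qgap_pos; exists ((1 + q ^ 2) / qgap ^ 2 * qgap ^ 2 / (1 - q ^ 2) ^ 2).
  split; [apply decay_const_nonneg, Rdiv_le_0_compat; [nra | apply pow_lt, qgap_pos]|].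
  intros n j Hv; destruct (valid_nj_lm n j Hv) as [Hl Hm]; unfold B3; cbv zeta.
  set (l := lval n) in *; set (m := mval j) in *.
  apply qnum_pair_decay; [exact Hl|].
  destruct (qnum_mul_le (l - m + 1) (l + m) ltac:(lra) ltac:(lra)) as [P1 P1'].
  destruct (qnum_mul_le (l - m) (l + m + 1) ltac:(lra) ltac:(lra)) as [P2 P2'].
  replace (- (l - m + 1 + (l + m))) with (- (2 * l + 1)) in P1' by ring.
  replace (- (l - m + (l + m + 1))) with (- (2 * l + 1)) in P2' by ring.
  rewrite Rmult_assoc; apply Rabs_le; unfold Rdiv in *; split; nra.
Qed.

Lemma decaying_coef_bounded (F : Z -> Z -> R) :
  (exists K, 0 <= K /\ forall n j, valid_nj n j -> Rabs (F n j) <= K * Rpower q (2 * lval n + 1)) ->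
  exists M, forall n j, valid_nj n j -> Rabs (F n j) <= M /\ Rabs ((IZR n + 1) * F n j) <= M.
Proof.
  intros [K [HK HF]]; pose proof ln_q_neg; assert (0 < / - ln q) by (apply Rinv_0_lt_compat; lra).
  exists (K + K * (/ 2 * / - ln q)); intros n j Hv; specialize (HF n j Hv).
  destruct (valid_nj_lm n j Hv) as [Hl _].
  assert (Rpower q (2 * lval n + 1) <= 1) by (apply Rpower_le1; lra).
  assert ((2 * lval n + 1) * Rpower q (2 * lval n + 1) <= / - ln q) by (apply mul_Rpower_le; lra).
  pose proof (Rpower_pos (2 * lval n + 1)); pose proof (Rabs_pos (F n j)).
  assert (En : IZR n + 1 = / 2 * (2 * lval n + 1)) by (unfold lval; field).
  rewrite Rabs_mult, (Rabs_pos_eq (IZR n + 1)) by (rewrite En; lra); rewrite En.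
  split; nra.
Qed.

End QNumbers.

(** * The generators *)

Definition plain_shift (dn dj : Z) (F : Z -> Z -> R) : wshift :=
  WShift false dn dj (fun i => let '(s, n, j) := i in F n j).

Definition spin_shift (dj : Z) (F : Z -> Z -> R) : wshift :=
  WShift false 0 dj (fun i => let '(s, n, j) := i in sgn s * F n j).

Lemma ws_lipschitz_plain dn dj F :
  (exists M, forall n j, valid_nj n j -> valid_nj (n + dn) (j + dj) -> Rabs (F n j) <= M) ->
  ws_lipschitz (plain_shift dn dj F).
Proof.
  intros [M HM]; split; [reflexivity|split].
  - exists M; intros [[s n] j] Hi Ht; apply HM; eapply validb_valid_nj; eassumption.
  - exists (Rabs (IZR dn) * M); intros [[s n] j] Hi Ht; rewrite validb_target_commD in Ht.
    cbn [plain_shift ws_commD ws_coef ws_dn].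
    replace ((IZR n + 1) * F n j - (IZR (n + dn) + 1) * F n j) with (- IZR dn * F n j)
      by (rewrite plus_IZR; ring).
    rewrite Rabs_mult, Rabs_Ropp; apply Rmult_le_compat_l; [apply Rabs_pos|].
    apply HM; eapply validb_valid_nj; eassumption.
Qed.

Lemma Rabs_sgn s : Rabs (sgn s) = 1.
Proof. destruct s; cbn; [apply Rabs_R1 | rewrite Rabs_left; lra]. Qed.

(* [D] exchanges the two signs, so [[D, spin_shift dj F]] has coefficients [-2 sgn s (n + 1) F]. *)
Lemma ws_lipschitz_spin dj F :
  (exists M, forall n j, valid_nj n j -> valid_nj n (j + dj) ->
     Rabs (F n j) <= M /\ Rabs ((IZR n + 1) * F n j) <= M) ->
  ws_lipschitz (spin_shift dj F).
Proof.
  intros [M HM].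
  assert (HM' : forall s n j, validb (s, n, j) = true ->
                validb (ws_target (spin_shift dj F) (s, n, j)) = true ->
                Rabs (F n j) <= M /\ Rabs ((IZR n + 1) * F n j) <= M).
  { intros s n j Hi Ht; apply HM; [eapply validb_valid_nj; eassumption|].
    rewrite <- (Z.add_0_r n); eapply validb_valid_nj; exact Ht. }
  split; [reflexivity|split].
  - exists M; intros [[s n] j] Hi Ht; cbn [spin_shift ws_coef].
    rewrite Rabs_mult, Rabs_sgn, Rmult_1_l; exact (proj1 (HM' s n j Hi Ht)).
  - exists (2 * M); intros [[s n] j] Hi Ht; rewrite validb_target_commD in Ht.
    cbn [spin_shift ws_commD ws_coef ws_dn]; rewrite Z.add_0_r.
    replace ((IZR n + 1) * (sgn (negb s) * F n j) - (IZR n + 1) * (sgn s * F n j))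
      with (- (2 * (sgn s * ((IZR n + 1) * F n j)))) by (destruct s; cbn; ring).
    rewrite Rabs_Ropp, Rabs_mult, Rabs_mult, Rabs_sgn, (Rabs_pos_eq 2) by lra.
    pose proof (proj2 (HM' s n j Hi Ht)); lra.
Qed.

Definition pi_a_shifts (q : R) : list wshift :=
  plain_shift (-1) (-1) (fun n j => A1 q (n - 1) (j - 1))
  :: plain_shift 1 (-1) (fun n j => - A2 q (n + 1) (j - 1))
  :: spin_shift (-1) (fun n j => A3 q n (j - 1)) :: nil.

Definition pi_astar_shifts (q : R) : list wshift :=
  plain_shift 1 1 (A1 q) :: plain_shift (-1) 1 (fun n j => - A2 q n j)
  :: spin_shift 1 (A3 q) :: nil.

Definition pi_b_shifts (q : R) : list wshift :=
  plain_shift (-1) 0 (fun n j => - B1 q (n - 1) j)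
  :: plain_shift 1 0 (fun n j => - B2 q (n + 1) j) :: spin_shift 0 (B3 q) :: nil.

Ltac unfold_generator_shifts Hi :=
  rewrite !ws_sum_cons; unfold ws_apply; rewrite Hi;
  cbn [ws_target plain_shift spin_shift ws_coef ws_flip ws_dn ws_dj xorb];
  rewrite ?Z.add_0_r; unfold ws_sum; cbn [fold_right].

Lemma represents_pi_a q : represents (pi_a_shifts q) (pi_a q).
Proof.
  intros f [[s n] j] Hi; unfold pi_a, pi_a_shifts; rewrite Hi; unfold_generator_shifts Hi.
  replace (n + -1)%Z with (n - 1)%Z by ring; replace (j + -1)%Z with (j - 1)%Z by ring; ring.
Qed.

Lemma represents_pi_astar q : represents (pi_astar_shifts q) (pi_astar q).
Proof.
  intros f [[s n] j] Hi; unfold pi_astar, pi_astar_shifts; rewrite Hi; unfold_generator_shifts Hi.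
  replace (n + -1)%Z with (n - 1)%Z by ring; ring.
Qed.

Lemma represents_pi_b q : represents (pi_b_shifts q) (pi_b q).
Proof.
  intros f [[s n] j] Hi; unfold pi_b, pi_b_shifts; rewrite Hi; unfold_generator_shifts Hi.
  replace (n + -1)%Z with (n - 1)%Z by ring; ring.
Qed.

Section Generators.

Variable q : R.
Hypothesis q_pos : 0 < q.
Hypothesis q_lt1 : q < 1.

Lemma pi_a_shifts_lipschitz : List.Forall ws_lipschitz (pi_a_shifts q).
Proof.
  repeat apply Forall_cons.
  - apply ws_lipschitz_plain; exists (/ (1 - q ^ 2)); intros n j _ Hv.
    replace (n + -1)%Z with (n - 1)%Z in Hv by ring.
    replace (j + -1)%Z with (j - 1)%Z in Hv by ring.
    pose proof (A1_bound q q_pos q_lt1 _ _ Hv); cbv beta; apply Rabs_le; lra.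
  - apply ws_lipschitz_plain; exists (/ (1 - q ^ 2)); intros n j _ Hv.
    replace (j + -1)%Z with (j - 1)%Z in Hv by ring.
    pose proof (A2_bound q q_pos q_lt1 _ _ Hv); cbv beta; apply Rabs_le; lra.
  - apply ws_lipschitz_spin.
    destruct (decaying_coef_bounded q q_pos q_lt1 _ (A3_decay q q_pos q_lt1)) as [M HM].
    exists M; intros n j _ Hv; replace (j + -1)%Z with (j - 1)%Z in Hv by ring; exact (HM _ _ Hv).
  - constructor.
Qed.

Lemma pi_astar_shifts_lipschitz : List.Forall ws_lipschitz (pi_astar_shifts q).
Proof.
  repeat apply Forall_cons.
  - apply ws_lipschitz_plain; exists (/ (1 - q ^ 2)); intros n j Hv _.
    pose proof (A1_bound q q_pos q_lt1 _ _ Hv); cbv beta; apply Rabs_le; lra.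
  - apply ws_lipschitz_plain; exists (/ (1 - q ^ 2)); intros n j Hv _.
    pose proof (A2_bound q q_pos q_lt1 _ _ Hv); cbv beta; apply Rabs_le; lra.
  - apply ws_lipschitz_spin.
    destruct (decaying_coef_bounded q q_pos q_lt1 _ (A3_decay q q_pos q_lt1)) as [M HM].
    exists M; intros n j Hv _; exact (HM _ _ Hv).
  - constructor.
Qed.

Lemma pi_b_shifts_lipschitz : List.Forall ws_lipschitz (pi_b_shifts q).
Proof.
  repeat apply Forall_cons.
  - apply ws_lipschitz_plain; exists (/ (1 - q ^ 2)); intros n j _ Hv.
    replace (n + -1)%Z with (n - 1)%Z in Hv by ring; rewrite Z.add_0_r in Hv.
    pose proof (B1_bound q q_pos q_lt1 _ _ Hv); cbv beta; apply Rabs_le; lra.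
  - apply ws_lipschitz_plain; exists (/ (1 - q ^ 2)); intros n j _ Hv; rewrite Z.add_0_r in Hv.
    pose proof (B2_bound q q_pos q_lt1 _ _ Hv); cbv beta; apply Rabs_le; lra.
  - apply ws_lipschitz_spin.
    destruct (decaying_coef_bounded q q_pos q_lt1 _ (B3_decay q q_pos q_lt1)) as [M HM].
    exists M; intros n j Hv _; exact (HM _ _ Hv).
  - constructor.
Qed.

End Generators.

Section Boundedness.

Variable q : R.
Hypothesis q_pos : 0 < q.
Hypothesis q_lt1 : q < 1.

Lemma piA_represented T : piA q T -> exists l, represents l T /\ List.Forall ws_lipschitz l.
Proof.
  apply InAlg_represented; [exact ws_lipschitz_id | exact ws_lipschitz_scale
                           | exact ws_lipschitz_comp|].
  intros G [-> | [-> | ->]]; eexists; split.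
  - apply represents_pi_a.
  - apply pi_a_shifts_lipschitz; assumption.
  - apply represents_pi_astar.
  - apply pi_astar_shifts_lipschitz; assumption.
  - apply represents_pi_b.
  - apply pi_b_shifts_lipschitz; assumption.
Qed.

Lemma Bgen_represented T : Bgen q T -> exists l, represents l T /\ List.Forall ws_bounded l.
Proof.
  intros [HT | [T0 [HT0 ->]]].
  - destruct (piA_represented T HT) as [l [Hl Hlip]]; exists l; split; [exact Hl|].
    exact (Forall_impl _ (fun e He => proj1 (proj2 He)) Hlip).
  - destruct (piA_represented T0 HT0) as [l [Hl Hlip]]; exists (map ws_commD l).
    split; [now apply represents_commD|].
    apply Forall_map; exact (Forall_impl _ (fun e He => proj2 (proj2 He)) Hlip).
Qed.

Lemma Balg_bounded T : Balg q T -> Bounded T.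
Proof.
  intros HT; destruct (InAlg_represented _ ws_bounded (proj1 (proj2 ws_lipschitz_id))
    ws_bounded_scale ws_bounded_comp Bgen_represented T HT) as [l [Hl Hb]].
  exact (Bounded_represents l T Hl Hb).
Qed.

Lemma spectral_triple_regular : Regular q.
Proof.
  intros T HT k; destruct (Bgen_represented T HT) as [l0 [Hl0 Hb0]].
  enough (exists l, represents l (Nat.iter k delta T) /\ List.Forall ws_bounded l)
    as [l [Hl Hb]] by exact (Bounded_represents l _ Hl Hb).
  induction k as [|k [l [Hl Hb]]]; [now exists l0|].
  exists (map ws_delta l); split; [now apply represents_delta|].
  apply Forall_map; exact (Forall_impl _ (fun e => ws_bounded_scale _ e) Hb).
Qed.

End Boundedness.

(** * The spectrum of D *)

Lemma Dop_symmetric i e : valid i -> valid e -> Dop (delta_ e) i = Dop (delta_ i) e.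
Proof.
  destruct i as [[s n] j], e as [[s' n'] j']; unfold valid, Dop; intros Hi He; rewrite Hi, He.
  unfold ext; rewrite (validb_sign (negb s) s), Hi, (validb_sign (negb s') s'), He.
  unfold delta_; cbn [fst snd].
  destruct (Z.eqb_spec n n'), (Z.eqb_spec n' n); try lia;
    destruct (Z.eqb_spec j j'), (Z.eqb_spec j' j); try lia;
    destruct s, s'; cbn; rewrite ?Bool.andb_false_r; subst; ring.
Qed.

Definition modes_below (K : nat) : list idx :=
  list_prod (list_prod (true :: false :: nil) (map Z.of_nat (seq 0 K)))
    (map (fun x => (Z.of_nat x - Z.of_nat K)%Z) (seq 0 (2 * K))).

Lemma modes_below_length K : length (modes_below K) = (2 * K * (2 * K))%nat.
Proof. unfold modes_below, idx; rewrite !length_prod, !length_map, !length_seq; cbn; lia. Qed.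

Lemma valid_in_modes_below K s n j :
  validb (s, n, j) = true -> (n < Z.of_nat K)%Z -> In (s, n, j) (modes_below K).
Proof.
  intros Hv Hn; apply validb_valid_nj in Hv as (Hn0 & Hj1 & Hj2).
  apply in_prod; [apply in_prod|].
  - destruct s; cbn; auto.
  - apply in_map_iff; exists (Z.to_nat n); split; [lia | apply in_seq; lia].
  - apply in_map_iff; exists (Z.to_nat (j + Z.of_nat K)); split; [lia | apply in_seq; lia].
Qed.

Lemma compact_resolvent eps : 0 < eps ->
  exists L : list idx, forall i, valid i -> eps <= / absD_eig i -> In i L.
Proof.
  intros He; destruct (archimed (/ eps)) as [Hup _].
  exists (modes_below (Z.to_nat (up (/ eps)))); intros [[s n] j] Hv Hle; unfold valid in Hv.
  apply valid_in_modes_below; [exact Hv|]; cbn in Hle.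
  destruct (validb_valid_nj _ _ _ Hv) as [Hn _]; apply IZR_le in Hn.
  assert (IZR n + 1 <= / eps).
  { apply Rinv_le_contravar in Hle; [rewrite Rinv_inv in Hle; exact Hle | exact He]. }
  assert (IZR n < IZR (up (/ eps))) as Hlt%lt_IZR by lra; lia.
Qed.

Definition square_block (K : nat) : list idx :=
  map (fun x => (true, Z.of_nat (K + x / K), Z.of_nat (x mod K))) (seq 0 (K * K)).

Lemma square_block_NoDup K : K <> 0%nat -> NoDup (square_block K).
Proof.
  intros HK; apply NoDup_map_NoDup_ForallPairs; [|apply seq_NoDup].
  intros x y _ _ E; injection E as Ed Em.
  rewrite (Nat.div_mod_eq x K), (Nat.div_mod_eq y K); lia.
Qed.

Lemma square_block_length K : length (square_block K) = (K * K)%nat.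
Proof. unfold square_block; rewrite length_map, length_seq; reflexivity. Qed.

Lemma in_square_block K i : K <> 0%nat -> In i (square_block K) ->
  exists n j, i = (true, n, j) /\ validb (true, n, j) = true /\ (n + 1 <= 2 * Z.of_nat K)%Z.
Proof.
  intros HK Hi; apply in_map_iff in Hi as [x [<- Hx]]; apply in_seq in Hx.
  pose proof (Nat.mod_upper_bound x K HK).
  assert (x / K < K)%nat by (apply Nat.Div0.div_lt_upper_bound; lia).
  do 2 eexists; split; [reflexivity|split; [|lia]].
  unfold validb; rewrite !Bool.andb_true_iff, !Z.leb_le; lia.
Qed.

Lemma INR_le_sqrt s k : (s * s <= k)%nat -> INR s <= sqrt (INR k).
Proof.
  intros H; rewrite <- (sqrt_pow2 (INR s)) by apply pos_INR; apply sqrt_le_1_alt.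
  replace (INR s ^ 2) with (INR (s * s)) by (rewrite mult_INR; ring); apply le_INR, H.
Qed.

Lemma sqrt_lt_INR s k : (k < s * s)%nat -> sqrt (INR k) < INR s.
Proof.
  intros H; rewrite <- (sqrt_pow2 (INR s)) by apply pos_INR.
  apply sqrt_lt_1_alt; split; [apply pos_INR|].
  replace (INR s ^ 2) with (INR (s * s)) by (rewrite mult_INR; ring); apply lt_INR, H.
Qed.

Definition sing_candidates (k : nat) (t : R) : Prop := 0 <= t /\ count_le t k.

(* Otherwise the more than [k] elements of [square_block (sqrt k + 1)] would all have
   [|D|^-1 > t]. *)
Lemma sing_candidates_lower k t : (1 <= k)%nat -> sing_candidates k t -> / (4 * sqrt (INR k)) <= t.
Proof.
  intros Hk [Ht [L [HL HLi]]].
  set (s := Nat.sqrt k); pose proof (Nat.sqrt_spec' k) as [Hs1 Hs2]; fold s in Hs1, Hs2.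
  set (K := S s).
  assert (Hsk : INR s <= sqrt (INR k)) by (apply INR_le_sqrt; exact Hs1).
  assert (Hk1 : 1 <= sqrt (INR k))
    by (rewrite <- sqrt_1; apply sqrt_le_1_alt; apply (le_INR 1), Hk).
  destruct (Rle_or_lt (/ (4 * sqrt (INR k))) t) as [H | H]; [exact H | exfalso].
  assert (Hincl : incl (square_block K) L).
  { intros i Hi; destruct (in_square_block K i ltac:(unfold K; lia) Hi) as [n [j [-> [Hv Hn]]]].
    apply HLi; [exact Hv|]; cbn.
    apply Rlt_le_trans with (/ (4 * sqrt (INR k))); [exact H|].
    destruct (validb_valid_nj _ _ _ Hv) as [Hn0%IZR_le _].
    apply Rinv_le_contravar; [lra|].
    apply IZR_le in Hn; rewrite plus_IZR, mult_IZR, <- INR_IZR_INZ in Hn.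
    unfold K in Hn; rewrite S_INR in Hn; cbn in Hn; lra. }
  pose proof (NoDup_incl_length (square_block_NoDup K ltac:(unfold K; lia)) Hincl).
  rewrite square_block_length in *; unfold K in *; lia.
Qed.

(* With [K = sqrt k / 2], the [4 K^2 <= k] basis vectors with [n < K] are the only ones
   with [|D|^-1 > 1/K]. *)
Lemma sing_candidates_upper k : (16 <= k)%nat ->
  exists t, sing_candidates k t /\ t <= 4 * / sqrt (INR k).
Proof.
  intros Hk; set (s := Nat.sqrt k); pose proof (Nat.sqrt_spec' k) as [Hs1 Hs2]; fold s in Hs1, Hs2.
  set (K := (s / 2)%nat).
  pose proof (Nat.div_mod_eq s 2) as Ed; fold K in Ed.
  pose proof (Nat.mod_upper_bound s 2 ltac:(lia)).
  assert (Hs4 : (4 <= s)%nat) by nia.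
  assert (HKk : (2 * K * (2 * K) <= k)%nat) by nia.
  assert (Hsk : sqrt (INR k) < INR (S s)) by (apply sqrt_lt_INR; exact Hs2).
  assert (Hk4 : 4 <= sqrt (INR k)).
  { replace 4 with (sqrt (4 ^ 2)) by (apply sqrt_pow2; lra).
    apply sqrt_le_1_alt; replace (4 ^ 2) with (INR 16) by (cbn; ring); apply le_INR, Hk. }
  assert (HKs : INR (S s) <= 2 * INR K + 2)
    by (replace (2 * INR K + 2) with (INR (2 * K + 2)) by (rewrite plus_INR, mult_INR; cbn; ring);
        apply le_INR; lia).
  assert (HK0 : 0 < INR K) by (apply lt_0_INR; lia).
  exists (/ INR K); split; [split|].
  - left; apply Rinv_0_lt_compat, HK0.
  - exists (modes_below K); split; [rewrite modes_below_length; exact HKk|].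
    intros [[s' n] j] Hv Hlt; cbn [absD_eig] in Hlt; apply valid_in_modes_below; [exact Hv|].
    destruct (validb_valid_nj _ _ _ Hv) as [Hn0%IZR_le _].
    destruct (Z_lt_le_dec n (Z.of_nat K)) as [Hl | Hl%IZR_le]; [exact Hl | exfalso].
    rewrite <- INR_IZR_INZ in Hl.
    assert (/ (IZR n + 1) <= / INR K) by (apply Rinv_le_contravar; lra); lra.
  - apply Rmult_le_reg_l with (INR K); [exact HK0|]; rewrite Rinv_r by lra.
    apply Rmult_le_reg_r with (sqrt (INR k)); [lra|].
    replace (INR K * (4 * / sqrt (INR k)) * sqrt (INR k)) with (4 * INR K) by (field; lra); lra.
Qed.

Lemma Rpower_INR_neg_half k : (1 <= k)%nat -> Rpower (INR k) (- / 2) = / sqrt (INR k).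
Proof. intros Hk; rewrite Rpower_Ropp, Rpower_sqrt; [reflexivity | apply lt_0_INR; lia]. Qed.

Lemma metric_dimension_two : MetricDimension 2.
Proof.
  exists (/ 4), 4, 16%nat; split; [lra | split; [lra | split; [lia|]]].
  intros k Hk; rewrite Rpower_INR_neg_half by lia.
  assert (Hk1 : 1 <= sqrt (INR k)) by (rewrite <- sqrt_1; apply sqrt_le_1_alt, (le_INR 1); lia).
  destruct (sing_candidates_upper k Hk) as [t [Ht Htk]].
  unfold sing_absDinv; fold (sing_candidates k).
  destruct (Glb_Rbar_correct (sing_candidates k)) as [Hlb Hglb].
  assert (G1 : Rbar_le (Glb_Rbar (sing_candidates k)) t) by (apply Hlb, Ht).
  assert (G2 : Rbar_le (/ (4 * sqrt (INR k))) (Glb_Rbar (sing_candidates k))).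
  { apply Hglb; intros x Hx; apply sing_candidates_lower; [lia | exact Hx]. }
  destruct (Glb_Rbar (sing_candidates k)) as [r | |]; cbn in G1, G2 |- *; try contradiction.
  rewrite Rinv_mult in G2; lra.
Qed.

Theorem mainTheorem7 (q : R) (hq0 : 0 < q) (hq1 : q < 1) :
  (forall T, Balg q T -> Bounded T) /\
  SpectralTriple q /\ Regular q /\ MetricDimension 2.
Proof.
  pose proof (Balg_bounded q hq0 hq1) as HB.
  split; [exact HB|].
  split; [|split; [exact (spectral_triple_regular q hq0 hq1) | exact metric_dimension_two]].
  split; [intros T HT; apply HB, InAlg_gen; left; exact HT|].
  split; [exact Dop_symmetric|].
  split; [exact compact_resolvent|].
  intros T HT; apply HB, InAlg_gen; right; exists T; split; [exact HT | reflexivity].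
Qed.
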